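(* Let $\varphi$ be a smooth skew-morphism of the dihedral group $D_n$, $n\ge3$. If $n$ is odd, then $\varphi$ is an automorphism of $D_n$. If $n$ is even and $\varphi$ is not an automorphism of $D_n$, then $\mathrm{Ker}\,\varphi$ is one of $\langle a^2\rangle$, $\langle a^2,ab\rangle$, $\langle a^2,b\rangle$. Moreover, letting $\gamma$ be the automorphism of $D_n$ with $\gamma(a)=a$, $\gamma(b)=ab$, $\varphi$ is a smooth skew-morphism with $\mathrm{Ker}\,\varphi=\langle a^2,b\rangle$ if and only if $\gamma^{-1}\varphi\gamma$ is a smooth skew-morphism with kernel $\langle a^2,ab\rangle$.
   Context: $D_n=\langle a,b\mid a^n=b^2=1,\ b^{-1}ab=a^{-1}\rangle$, $n\ge3$. A skew-morphism of a finite group $A$ is a permutation $\varphi$ of the set $A$ with $\varphi(1)=1$ for which there exists a function $\pi:A\to\mathbb{Z}_k$, where $k$ is the order of $\varphi$, such that $\varphi(xy)=\varphi(x)\varphi^{\pi(x)}(y)$ for all $x,y\in A$; $\pi$ is the power function. An automorphism is a skew-morphism with $\pi\equiv1$. The kernel is $\mathrm{Ker}\,\varphi=\{x:\pi(x)=1\}$, and the core is $\mathrm{Core}\,\varphi=\bigcap_{i=1}^k\varphi^i(\mathrm{Ker}\,\varphi)$. $\varphi$ is smooth if $\varphi(x)\in x\,\mathrm{Core}\,\varphi$ for all $x$. *)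

From mathcomp Require Import all_boot all_fingroup.
Set Implicit Arguments. Unset Strict Implicit. Unset Printing Implicit Defensive.
Local Open Scope group_scope.

Section Skew.
Variable gT : finGroupType.
Implicit Types (G : {set gT}) (phi : {perm gT}) (pi : gT -> nat).

(* The order k of phi is #[phi]; the power function pi : G -> Z_k is
   represented by natural-number representatives (only pi x mod k matters,
   since phi ^+ k = 1).  phi is a permutation of the set G (perm_on G). *)
Definition skew_morphism G phi pi : Prop :=
  [/\ perm_on G phi, phi 1 = 1 &
      {in G &, forall x y, phi (x * y) = phi x * (phi ^+ pi x) y}].

Definition skew_ker G phi pi : {set gT} :=
  [set x in G | pi x == 1 %[mod #[phi]]].

Definition skew_core G phi pi : {set gT} :=
  \bigcap_(1 <= i < #[phi].+1) [set (phi ^+ i) x | x in skew_ker G phi pi].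

Definition smooth_skew G phi pi : Prop :=
  skew_morphism G phi pi /\
  {in G, forall x, phi x \in x *: skew_core G phi pi}.

Definition skew_is_aut G phi pi : Prop :=
  {in G, forall x, pi x = 1 %[mod #[phi]]}.

(* G is the dihedral group D_n = <a, b | a^n = b^2 = 1, b^-1 a b = a^-1>
   with generators a, b (presentation faithfully realised: order 2n). *)
Definition dihedral_pres G (n : nat) (a b : gT) : Prop :=
  [/\ G = <<[set a; b]>>, #|G| = (2 * n)%N, a ^+ n = 1, b ^+ 2 = 1 &
      b^-1 * a * b = a^-1].

End Skew.

(* Smoothness makes the power function pi constant on the orbits of phi, so pi
   is a homomorphism from G to the multiplicative monoid Z_k, and the kernel
   (a subgroup for every skew-morphism) contains every commutator, in particular
   a^2 = [a, b]^-1.  If a is in the kernel then so is b: otherwise the kernel is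
   <a>, phi maps each coset of <a> to itself, and phi^(pi b) agrees with phi on
   a and on b, forcing pi b = 1.  So phi is an automorphism as soon as a is in
   the kernel, which is automatic for odd n, a being a power of a^2; for even n
   the kernel is a subgroup containing a^2 but not a, hence <a^2>, <a^2, ab> or
   <a^2, b>.  Finally, conjugating by an automorphism d turns a smooth
   skew-morphism with power function pi into one with power function pi o d
   whose kernel is the d-preimage of the old one, and gamma maps <a^2, ab> onto
   <a^2, b>. *)

From mathcomp Require Import all_boot all_fingroup cyclic.
Set Implicit Arguments. Unset Strict Implicit. Unset Printing Implicit Defensive.
Local Open Scope group_scope.

Lemma perm_onX (T : finType) (S : {set T}) (s : {perm T}) m :
  perm_on S s -> perm_on S (s ^+ m).
Proof.
move=> Ss; suff: s ^+ m \in Sym_group S by rewrite inE.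
by rewrite groupX ?inE.
Qed.

Lemma perm_on_inj (T : finType) (S : {set T}) (s t : {perm T}) :
  perm_on S s -> perm_on S t -> {in S, s =1 t} -> s = t.
Proof.
move=> Ss St eq_st; apply/permP => x.
by have [/eq_st // | xNS] := boolP (x \in S); rewrite !(out_perm _ xNS).
Qed.

Lemma mulgJV (T : finGroupType) (x y : T) : x * y * x^-1 = y ^ x^-1.
Proof. by rewrite conjgE invgK mulgA. Qed.

Lemma conj_permX (T : finType) (s t : {perm T}) m x :
  ((s * t * s^-1) ^+ m) x = s^-1 ((t ^+ m) (s x)).
Proof. by rewrite mulgJV -conjXg conjgE invgK !permM. Qed.

Lemma conj_perm_order (T : finType) (s t : {perm T}) : #[s * t * s^-1] = #[t].
Proof. by rewrite mulgJV orderJ. Qed.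

Section SkewMorphism.
Variables (gT : finGroupType) (G : {group gT}) (phi : {perm gT}) (pi : gT -> nat).
Local Notation k := #[phi].
Local Notation Ker := (skew_ker G phi pi).
Local Notation Core := (skew_core G phi pi).

Lemma skew_kerP x : reflect (x \in G /\ pi x = 1 %[mod k]) (x \in Ker).
Proof. by rewrite inE; apply: (iffP andP) => -[-> /eqP]. Qed.

Lemma skew_ker_sub : Ker \subset G.
Proof. by apply/subsetP => x /skew_kerP[]. Qed.

Lemma skew_ker_exp x : x \in Ker -> phi ^+ pi x = phi.
Proof. by case/skew_kerP=> _ pix; rewrite -expg_mod_order pix expg_mod_order. Qed.

Lemma skew_is_aut_ker : G \subset Ker -> skew_is_aut G phi pi.
Proof. by move=> sGK x /(subsetP sGK)/skew_kerP[]. Qed.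

Lemma skew_coreP c : reflect (forall j, (phi ^+ j) c \in Ker) (c \in Core).
Proof.
apply: (iffP idP) => [cC j | cK].
  have k_gt0 : 0 < k := order_gt0 phi.
  have jk_lt : j %% k < k by rewrite ltn_mod.
  pose i := k - j %% k.
  have i_range : i \in index_iota 1 k.+1.
    by rewrite mem_index_iota /i subn_gt0 jk_lt ltnS leq_subr.
  move: cC; rewrite /skew_core (big_rem i) //= inE => /andP[/imsetP[y yK ->] _].
  rewrite -permM -expgD -expg_mod_order -modnDmr subnK ?(ltnW jk_lt) // modnn.
  by rewrite expg0 perm1.
apply: (big_ind (fun S : {set gT} => c \in S)) => [|S T cS cT|i _]; rewrite ?inE ?cS //.
apply/imsetP; exists ((phi ^+ (i * #[phi ^+ i].-1)) c); first exact: cK.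
by rewrite expgM -invg_expg permKV.
Qed.

Lemma skew_core_sub : Core \subset Ker.
Proof. by apply/subsetP => c /skew_coreP/(_ 0); rewrite expg0 perm1. Qed.

Definition skew_sum x m := \sum_(i < m) pi ((phi ^+ i) x).

Lemma skew_sum_const x e m :
  (forall i, pi ((phi ^+ i) x) = e %[mod k]) -> skew_sum x m = m * e %[mod k].
Proof.
move=> pi_orbit; elim: m => [|m IHm]; first by rewrite /skew_sum big_ord0.
by rewrite /skew_sum big_ord_recr /= mulSn addnC -modnDm IHm pi_orbit modnDm.
Qed.

Hypothesis skew : skew_morphism G phi pi.

Lemma skew_perm_on : perm_on G phi. Proof. by case: skew. Qed.
Lemma skew_morph1 : phi 1 = 1. Proof. by case: skew. Qed.
Lemma skew_morphM : {in G &, forall x y, phi (x * y) = phi x * (phi ^+ pi x) y}.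
Proof. by case: skew. Qed.

Lemma mem_skew_exp m x : x \in G -> (phi ^+ m) x \in G.
Proof. by rewrite (perm_closed _ (perm_onX m skew_perm_on)). Qed.

Lemma skew_exp1 m : (phi ^+ m) 1 = 1.
Proof.
elim: m => [|m IHm]; first by rewrite expg0 perm1.
by rewrite expgSr permM IHm skew_morph1.
Qed.

Lemma skew_exp_mod m m' : {in G, phi ^+ m =1 phi ^+ m'} -> m = m' %[mod k].
Proof.
move=> eq_m; apply/eqP; rewrite -eq_expg_mod_order; apply/eqP.
by apply: perm_on_inj eq_m; apply: perm_onX; apply: skew_perm_on.
Qed.

Lemma skew_expM m x y : x \in G -> y \in G ->
  (phi ^+ m) (x * y) = (phi ^+ m) x * (phi ^+ skew_sum x m) y.
Proof.
move=> xG yG; elim: m => [|m IHm]; first by rewrite /skew_sum big_ord0 !expg0 !perm1.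
rewrite expgSr permM IHm skew_morphM ?mem_skew_exp // /skew_sum big_ord_recr /=.
by rewrite permM expgD permM.
Qed.

Lemma skew_powerM x y : x \in G -> y \in G -> pi (x * y) = skew_sum y (pi x) %[mod k].
Proof.
move=> xG yG; apply: skew_exp_mod => z zG.
have := skew_morphM (groupM xG yG) zG.
rewrite -mulgA skew_morphM ?groupM // skew_expM // skew_morphM // -!mulgA.
by move/mulgI/mulgI.
Qed.

Lemma skew_power1 : pi 1 = 1 %[mod k].
Proof.
apply: skew_exp_mod => z zG; have := skew_morphM (group1 G) zG.
by rewrite mul1g skew_morph1 mul1g.
Qed.

Lemma skew_ker_morphM x y : x \in Ker -> y \in G -> phi (x * y) = phi x * phi y.
Proof. by move=> xK yG; rewrite skew_morphM ?skew_ker_exp //; case/skew_kerP: xK. Qed.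

Lemma skew_ker_morphV x : x \in Ker -> phi x^-1 = (phi x)^-1.
Proof.
move=> xK; have xG : x \in G by case/skew_kerP: xK.
by apply/esym/eqP; rewrite eq_invg_mul -skew_ker_morphM ?groupV // mulgV skew_morph1.
Qed.

(* phi (x y z) computed along (x y) z and x (y z) *)
Lemma skew_ker_powerM x y : x \in Ker -> y \in G -> pi (x * y) = pi y %[mod k].
Proof.
move=> xK yG; have xG : x \in G by case/skew_kerP: xK.
apply: skew_exp_mod => z zG; have := skew_morphM (groupM xG yG) zG.
rewrite -mulgA (skew_ker_morphM xK) ?groupM // (skew_ker_morphM xK yG) skew_morphM // mulgA.
by move/mulgI.
Qed.

Lemma skew_ker_group_set : group_set Ker.
Proof.
apply/group_setP; split; first by apply/skew_kerP; rewrite group1 skew_power1.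
move=> x y xK /[dup] /skew_kerP[yG piy] yK; apply/skew_kerP.
by rewrite groupM ?skew_ker_powerM //; case/skew_kerP: xK.
Qed.

Canonical skew_ker_group := Group skew_ker_group_set.

End SkewMorphism.

Section SmoothSkewMorphism.
Variables (gT : finGroupType) (G : {group gT}) (phi : {perm gT}) (pi : gT -> nat).
Hypothesis smooth : smooth_skew G phi pi.
Local Notation k := #[phi].
Local Notation Ker := (skew_ker G phi pi).

Let skew : skew_morphism G phi pi := proj1 smooth.

Lemma smooth_power_phi x : x \in G -> pi (phi x) = pi x %[mod k].
Proof.
move=> xG; have /lcosetP[c /skew_coreP cK ->] := proj2 smooth x xG.
have cG : c \in G by have := cK 0; rewrite expg0 perm1 => /skew_kerP[].
rewrite (skew_powerM skew) // (skew_sum_const (e := 1)) ?muln1 // => i.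
by case/skew_kerP: (cK i).
Qed.

Lemma smooth_power_exp i x : x \in G -> pi ((phi ^+ i) x) = pi x %[mod k].
Proof.
move=> xG; elim: i => [|i IHi]; first by rewrite expg0 perm1.
by rewrite expgSr permM smooth_power_phi ?(mem_skew_exp skew).
Qed.

Lemma smooth_powerM x y : x \in G -> y \in G -> pi (x * y) = pi x * pi y %[mod k].
Proof.
move=> xG yG; rewrite (skew_powerM skew) //.
by apply: skew_sum_const => i; apply: smooth_power_exp.
Qed.

Lemma smooth_ker_expM m x y : x \in Ker -> y \in G ->
  (phi ^+ m) (x * y) = (phi ^+ m) x * (phi ^+ m) y.
Proof.
move=> /[dup] /skew_kerP[xG pix] xK yG; rewrite (skew_expM skew) //.
suff -> : phi ^+ skew_sum phi pi x m = phi ^+ m by [].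
rewrite -expg_mod_order (skew_sum_const (e := 1)) ?muln1 ?expg_mod_order // => i.
by rewrite smooth_power_exp.
Qed.

Lemma smooth_commg_ker x y : x \in G -> y \in G -> [~ x, y] \in Ker.
Proof.
move=> xG yG; apply/skew_kerP; split; first exact: groupR.
have piV z : z \in G -> pi z^-1 * pi z = 1 %[mod k].
  by move=> zG; rewrite -smooth_powerM ?groupV // mulVg (skew_power1 skew).
rewrite commgEl conjgE mulgA smooth_powerM ?groupM ?groupV // -modnMm.
rewrite !smooth_powerM ?groupV // modnMm mulnACA -modnMm.
by rewrite !piV // modnMm.
Qed.

End SmoothSkewMorphism.

Section Dihedral.
Variables (gT : finGroupType) (G : {group gT}) (a b : gT).
Hypotheses (defG : G :=: <<[set a; b]>>) (b2 : b ^+ 2 = 1) (bab : b^-1 * a * b = a^-1).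

Lemma dihedral_a : a \in G. Proof. by rewrite defG mem_gen // !inE eqxx. Qed.
Lemma dihedral_b : b \in G. Proof. by rewrite defG mem_gen // !inE eqxx orbT. Qed.

Lemma dihedral_invb : b^-1 = b.
Proof. by apply/eqP; rewrite eq_invg_mul -expg2 b2. Qed.

Lemma dihedral_conjb : a ^ b = a^-1.
Proof. by rewrite conjgE mulgA bab. Qed.

Lemma dihedral_conjXb i : (a ^+ i) ^ b = a ^- i.
Proof. by rewrite conjXg dihedral_conjb expVgn. Qed.

Lemma dihedral_invXb i : (b * a ^+ i)^-1 = b * a ^+ i.
Proof. by rewrite invMg dihedral_invb conjgC conjVg dihedral_conjXb invgK. Qed.

Lemma dihedral_conj_cycle x i : x \in <[a]> -> x ^ (b * a ^+ i) = x^-1.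
Proof.
case/cycleP=> j ->; rewrite conjgM dihedral_conjXb.
by apply/conjg_fixP/commgP/commute_sym/commuteV/commuteX2.
Qed.

Lemma dihedral_decomp x : x \in G -> exists i (e : bool), x = a ^+ i * b ^+ e.
Proof.
have nAB : <[b]> \subset 'N(<[a]>).
  by rewrite cycle_subG inE -cycleJ dihedral_conjb cycleV subxx.
have sGAB : G \subset <[a]> * <[b]>.
  rewrite -(comm_joingE (esym (normC nAB))) defG gen_subG subUset !sub1set.
  by rewrite !(subsetP _ _ (cycle_id _)) ?joing_subl ?joing_subr.
move=> /(subsetP sGAB) /mulsgP[_ _ /cycleP[i ->] /cycleP[j ->] ->].
exists i, (odd j); rewrite -[in LHS](odd_double_half j) expgD -mul2n expgM b2 expg1n.
by rewrite mulg1.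
Qed.

Lemma dihedral_sub (K H : {group gT}) : K \subset G -> a ^+ 2 \in K -> a ^+ 2 \in H ->
  (forall o e : bool, a ^+ o * b ^+ e \in K -> a ^+ o * b ^+ e \in H) -> K \subset H.
Proof.
move=> sKG a2K a2H oeKH; apply/subsetP => x xK.
have [i [e xE]] := dihedral_decomp (subsetP sKG x xK).
have aiE : a ^+ i = (a ^+ 2) ^+ i./2 * a ^+ odd i.
  by rewrite -expgM -expgD mul2n addnC odd_double_half.
rewrite xE aiE -mulgA groupM ?(groupX _ a2H) //; apply: oeKH.
by rewrite -(groupMl _ (groupX i./2 a2K)) mulgA -aiE -xE.
Qed.

Lemma dihedral_subgroup_a2 (K : {group gT}) : K \subset G -> a ^+ 2 \in K -> a \notin K ->
  K :=: <[a ^+ 2]> \/ K :=: <<[set a ^+ 2; a * b]>> \/ K :=: <<[set a ^+ 2; b]>>.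
Proof.
move=> sKG a2K aNK.
have abK_bNK : a * b \in K -> b \notin K.
  by move=> abK; apply: contra aNK => bK; rewrite -(mulgK b a) groupM ?groupV.
have gen_a2 c : a ^+ 2 \in <<[set a ^+ 2; c]>> by rewrite mem_gen // !inE eqxx.
have gen_c c : c \in <<[set a ^+ 2; c]>> by rewrite mem_gen // !inE eqxx orbT.
have [bK | bNK] := boolP (b \in K).
  right; right; apply/eqP; rewrite eqEsubset gen_subG subUset !sub1set a2K bK !andbT.
  apply: (dihedral_sub sKG a2K (gen_a2 b)) => -[] [] /=;
    rewrite ?mulg1 ?mul1g ?group1 ?gen_c ?(negPf aNK) //.
  by move/abK_bNK; rewrite bK.
have [abK | abNK] := boolP (a * b \in K).
  right; left; apply/eqP; rewrite eqEsubset gen_subG subUset !sub1set a2K abK !andbT.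
  apply: (dihedral_sub sKG a2K (gen_a2 _)) => -[] [] /=;
    by rewrite ?mulg1 ?mul1g ?group1 ?gen_c ?(negPf aNK) ?(negPf bNK).
left; apply/eqP; rewrite eqEsubset cycle_subG a2K andbT.
apply: (dihedral_sub sKG a2K (cycle_id _)) => -[] [] /=;
  by rewrite ?mulg1 ?mul1g ?group1 ?(negPf aNK) ?(negPf bNK) ?(negPf abNK).
Qed.

End Dihedral.

Section SmoothDihedral.
Variables (gT : finGroupType) (G : {group gT}) (a b : gT).
Hypotheses (defG : G :=: <<[set a; b]>>) (b2 : b ^+ 2 = 1) (bab : b^-1 * a * b = a^-1).
Variables (phi : {perm gT}) (pi : gT -> nat).
Hypothesis smooth : smooth_skew G phi pi.
Local Notation Ker := (skew_ker G phi pi).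

Let skew : skew_morphism G phi pi := proj1 smooth.
Let aG := dihedral_a defG.
Let bG := dihedral_b defG.

Lemma smooth_dihedral_a2 : a ^+ 2 \in Ker.
Proof.
have -> : a ^+ 2 = [~ a, b]^-1.
  by rewrite commgEl (dihedral_conjb bab) invMg invgK expg2.
by rewrite groupV smooth_commg_ker.
Qed.

Lemma smooth_dihedral_exp_eq m : a \in Ker ->
  (phi ^+ m) a = phi a -> (phi ^+ m) b = phi b -> {in G, phi ^+ m =1 phi}.
Proof.
move=> aK phima phimb x /(dihedral_decomp defG b2 bab)[i [e ->]].
have phim_ai : (phi ^+ m) (a ^+ i) = phi (a ^+ i).
  elim: i => [|i IHi]; first by rewrite expg0 (skew_exp1 skew) (skew_morph1 skew).
  by rewrite expgS (smooth_ker_expM smooth) ?(skew_ker_morphM skew) ?groupX // IHi phima.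
rewrite (smooth_ker_expM smooth) ?(skew_ker_morphM skew) ?groupX // phim_ai.
by case: e; rewrite /= ?phimb // expg0 (skew_exp1 skew) (skew_morph1 skew).
Qed.

Lemma smooth_dihedral_ker_b : a \in Ker -> b \in Ker.
Proof.
move=> aK; apply: contraT => bNK.
have sKA : Ker \subset <[a]>.
  apply/subsetP => x xK.
  have [i [[] xE]] := dihedral_decomp defG b2 bab (subsetP (skew_ker_sub G phi pi) x xK).
    by case/negP: bNK; rewrite -(groupMl _ (groupX i aK)) -[b]expg1 -xE.
  by rewrite xE mulg1 mem_cycle.
have phi_cycle x : x \in G -> exists i, phi x = x * a ^+ i.
  move=> xG; have /lcosetP[c cC ->] := proj2 smooth x xG.
  by have /cycleP[i ->] := subsetP sKA c (subsetP (skew_core_sub G phi pi) c cC); exists i.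
have phi_a : phi a \in <[a]>.
  by have [i ->] := phi_cycle a aG; rewrite groupM ?cycle_id ?mem_cycle.
have [s phi_b] := phi_cycle b bG.
have phib_b : (phi ^+ pi b) b = phi b.
  have := skew_morphM skew bG bG; rewrite -expg2 b2 (skew_morph1 skew) => /esym/eqP.
  by rewrite -eq_invg_mul phi_b (dihedral_invXb b2 bab) => /eqP.
have phib_a : (phi ^+ pi b) a = phi a.
  have ba : b * a = a^-1 * b by rewrite [RHS]conjgC conjVg (dihedral_conjb bab) invgK.
  have := skew_morphM skew bG aG.
  rewrite ba (skew_ker_morphM skew) ?groupV // (skew_ker_morphV skew aK) => E.
  rewrite -[LHS](mulKg (phi b)) -E -conjgE phi_b (dihedral_conj_cycle bab) ?groupV //.
  exact: invgK.
case/negP: bNK; apply/skew_kerP; split=> //; apply: (skew_exp_mod skew).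
exact: smooth_dihedral_exp_eq.
Qed.

Lemma smooth_dihedral_aut : a \in Ker -> skew_is_aut G phi pi.
Proof.
move=> aK; apply: skew_is_aut_ker.
have sGK : <<[set a; b]>> \subset Ker.
  by rewrite gen_subG subUset !sub1set aK smooth_dihedral_ker_b.
by rewrite -defG in sGK.
Qed.

End SmoothDihedral.

Section PermAutomorphism.
Variables (gT : finGroupType) (G : {group gT}) (d : {perm gT}).
Hypotheses (dG : perm_on G d) (dM : {in G &, {morph d : x y / x * y}}).

Lemma perm_morph1 : d 1 = 1.
Proof. by apply: (mulgI (d 1)); rewrite -dM // !mulg1. Qed.

Lemma perm_morphV x : x \in G -> d x^-1 = (d x)^-1.
Proof.
by move=> xG; apply/esym/eqP; rewrite eq_invg_mul -dM ?groupV // mulgV perm_morph1.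
Qed.

Lemma perm_inv_morphM : {in G &, {morph d^-1 : x y / x * y}}.
Proof.
move=> x y xG yG; have dVG z : (d^-1 z \in G) = (z \in G) := perm_closed z (perm_onV dG).
by rewrite -{1}(permKV d x) -{1}(permKV d y) -dM ?dVG // permK.
Qed.

Lemma perm_morph_gen (S : {set gT}) (H : {group gT}) :
  S \subset G -> {in S, forall x, d x \in H} -> {in <<S>>, forall x, d x \in H}.
Proof.
move=> sSG dSH.
have preim_group : group_set [set y in G | d y \in H].
  apply/group_setP; split=> [|x y]; first by rewrite inE group1 perm_morph1 group1.
  by rewrite !inE => /andP[xG xH] /andP[yG yH]; rewrite groupM // dM // groupM.
suff /subsetP sSH : <<S>> \subset Group preim_group.
  by move=> x /sSH; rewrite inE => /andP[].
by rewrite gen_subG; apply/subsetP => x xS; rewrite inE (subsetP sSG) // dSH.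
Qed.

Lemma skew_ker_conj (phi : {perm gT}) (pi : gT -> nat) :
  skew_ker G (d * phi * d^-1) (pi \o d) = [set x in G | d x \in skew_ker G phi pi].
Proof.
apply/setP => x; rewrite !inE conj_perm_order (perm_closed _ dG).
by case: (x \in G).
Qed.

Lemma smooth_conj (phi : {perm gT}) (pi : gT -> nat) :
  smooth_skew G phi pi -> smooth_skew G (d * phi * d^-1) (pi \o d).
Proof.
case=> -[phiG phi1 phiM] phi_core; set psi := d * phi * d^-1.
have psiE x : psi x = d^-1 (phi (d x)) by rewrite -(expg1 psi) conj_permX.
have dVG x : (d^-1 x \in G) = (x \in G) := perm_closed x (perm_onV dG).
split; first split.
- by rewrite !perm_onM ?perm_onV.
- by rewrite psiE perm_morph1 phi1 -{1}perm_morph1 permK.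
- move=> x y xG yG; rewrite !psiE conj_permX dM // phiM ?(perm_closed _ dG) //.
  by rewrite perm_inv_morphM ?(perm_closed _ phiG) ?(perm_closed _ (perm_onX _ phiG))
    ?(perm_closed _ dG).
move=> x xG; have dxG : d x \in G by rewrite (perm_closed _ dG).
have /lcosetP[c /skew_coreP cK phi_dx] := phi_core _ dxG.
apply/lcosetP; exists (d^-1 c).
  apply/skew_coreP => j; rewrite skew_ker_conj conj_permX inE /= !permKV cK andbT dVG.
  by case/skew_kerP: (cK j).
have cG : c \in G by have := cK 0; rewrite expg0 perm1 => /skew_kerP[].
by rewrite psiE phi_dx perm_inv_morphM ?(perm_closed _ dG) // permK.
Qed.

End PermAutomorphism.

Section DihedralAutomorphism.
Variables (gT : finGroupType) (G : {group gT}) (a b : gT) (gamma : {perm gT}).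
Hypotheses (defG : G :=: <<[set a; b]>>) (gammaG : perm_on G gamma)
  (gammaM : {in G &, {morph gamma : x y / x * y}})
  (gamma_a : gamma a = a) (gamma_b : gamma b = a * b).

Lemma preim_gamma :
  [set x in G | gamma x \in <<[set a ^+ 2; b]>>] = <<[set a ^+ 2; a * b]>>.
Proof.
have aG := dihedral_a defG; have bG := dihedral_b defG.
have gen_a2 c : a ^+ 2 \in <<[set a ^+ 2; c]>> by rewrite mem_gen // !inE eqxx.
have gen_c c : c \in <<[set a ^+ 2; c]>> by rewrite mem_gen // !inE eqxx orbT.
have gamma_a2 : gamma (a ^+ 2) = a ^+ 2 by rewrite expg2 gammaM // gamma_a.
have gammaV_a2 : gamma^-1 (a ^+ 2) = a ^+ 2 by rewrite -{1}gamma_a2 permK.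
have gammaV_b : gamma^-1 b = (a ^+ 2)^-1 * (a * b).
  apply: (@perm_inj _ gamma); rewrite permKV gammaM ?groupV ?groupM ?groupX //.
  rewrite (perm_morphV gammaM) ?groupX // gamma_a2 gammaM // gamma_a gamma_b.
  by rewrite [a * (a * b)]mulgA -expg2 mulKg.
apply/setP => x; rewrite inE; apply/andP/idP => [[xG gxH] | xH].
  rewrite -(permK gamma x).
  apply: (perm_morph_gen (perm_inv_morphM gammaG gammaM) _ _ gxH).
    by rewrite subUset !sub1set groupX.
  move=> y; rewrite !inE => /orP[] /eqP ->; rewrite ?gammaV_a2 ?gammaV_b; first exact: gen_a2.
  by apply: groupM; [rewrite groupV; exact: gen_a2 | exact: gen_c].
split.
  by apply: (subsetP _ x xH); rewrite gen_subG subUset !sub1set groupX ?groupM.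
apply: (perm_morph_gen gammaM _ _ xH); first by rewrite subUset !sub1set groupX ?groupM.
move=> y; rewrite !inE => /orP[] /eqP ->; first by rewrite gamma_a2; exact: gen_a2.
rewrite gammaM // gamma_a gamma_b mulgA -expg2.
by apply: groupM; [exact: gen_a2 | exact: gen_c].
Qed.

Lemma preim_gammaV :
  [set x in G | gamma^-1 x \in <<[set a ^+ 2; a * b]>>] = <<[set a ^+ 2; b]>>.
Proof.
apply/setP => x; rewrite -preim_gamma !inE permKV (perm_closed _ (perm_onV gammaG)).
rewrite andbA andbb.
apply: andb_idl => /(subsetP _ x); apply.
by rewrite gen_subG subUset !sub1set groupX ?(dihedral_a defG) ?(dihedral_b defG).
Qed.

End DihedralAutomorphism.

Theorem lemma5 (gT : finGroupType) (G : {group gT}) (n : nat) (a b : gT) :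
  (3 <= n)%N -> dihedral_pres G n a b ->
  (odd n -> forall (phi : {perm gT}) (pi : gT -> nat),
     smooth_skew G phi pi -> skew_is_aut G phi pi)
  /\
  (~~ odd n -> forall (phi : {perm gT}) (pi : gT -> nat),
     smooth_skew G phi pi -> ~ skew_is_aut G phi pi ->
     skew_ker G phi pi = <[a ^+ 2]> \/
     skew_ker G phi pi = <<[set a ^+ 2; a * b]>> \/
     skew_ker G phi pi = <<[set a ^+ 2; b]>>)
  /\
  (~~ odd n -> forall gamma : {perm gT},
     perm_on G gamma -> {in G &, {morph gamma : x y / x * y}} ->
     gamma a = a -> gamma b = a * b ->
     forall phi : {perm gT},
       (exists pi : gT -> nat, smooth_skew G phi pi /\
           skew_ker G phi pi = <<[set a ^+ 2; b]>>) <->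
       (exists pi : gT -> nat, smooth_skew G (gamma * phi * gamma^-1) pi /\
           skew_ker G (gamma * phi * gamma^-1) pi = <<[set a ^+ 2; a * b]>>)).
Proof.
move=> _ [defG _ an b2 bab]; split; [|split].
- move=> n_odd phi pi smooth; apply: (smooth_dihedral_aut defG b2 bab smooth).
  have -> : a = (a ^+ 2) ^+ n.+1./2 by rewrite -expgM mul2n halfK /= n_odd expgS an mulg1.
  apply: (@groupX _ (skew_ker_group (proj1 smooth))).
  exact: (smooth_dihedral_a2 defG bab smooth).
- move=> _ phi pi smooth not_aut.
  apply: (dihedral_subgroup_a2 defG b2 bab (K := skew_ker_group (proj1 smooth))).
  + exact: skew_ker_sub.
  + exact: (smooth_dihedral_a2 defG bab smooth).
  + by apply/negP => /(smooth_dihedral_aut defG b2 bab smooth).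
- move=> _ gamma gammaG gammaM gamma_a gamma_b phi.
  split=> -[pi [smooth kerE]].
    exists (pi \o gamma); split; first exact: smooth_conj.
    by rewrite skew_ker_conj // kerE preim_gamma.
  have conjK : gamma^-1 * (gamma * phi * gamma^-1) * gamma^-1^-1 = phi.
    by rewrite invgK !mulgA mulVg mul1g mulgKV.
  have smooth' := smooth_conj (perm_onV gammaG) (perm_inv_morphM gammaG gammaM) smooth.
  exists (pi \o gamma^-1); rewrite conjK in smooth'; split=> //.
  by rewrite -{1}conjK skew_ker_conj ?perm_onV // kerE preim_gammaV.
Qed.
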